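(* Let $\lambda<\kappa$ be infinite cardinals with $\kappa$ regular and $2^\lambda=2^\kappa$. Then for every $A\subseteq\kappa^\kappa$ there is a closed set $C\subseteq\kappa^\kappa\times2^\kappa$ such that $A=\{f\in\kappa^\kappa\mid\exists g\in2^\kappa\,((f,g)\in C)\}$.
   Context: $\kappa^\kappa$ and $2^\kappa$ carry the usual (bounded) topology generated by the sets $\{\zeta\mid\eta\subseteq\zeta\}$ for $\eta$ a function with domain some ordinal $\alpha<\kappa$ (into $\kappa$, resp. $\{0,1\}$); $\kappa^\kappa\times2^\kappa$ carries the product topology, and ''closed'' refers to this topology. *)

(* Cardinals are represented by types (up to equipotence);
   the cardinal kappa is represented as a von Neumann-style initial ordinal:
   a type K with a strict well-order ltK such that no proper initial
   segment is equipotent with (injects onto) K. *)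
From Stdlib Require Import Classical.

Set Implicit Arguments.

Definition injective {A B : Type} (f : A -> B) : Prop :=
  forall x y, f x = f y -> x = y.

Definition bijective {A B : Type} (f : A -> B) : Prop :=
  injective f /\ forall y, exists x, f x = y.

Definition card_le (A B : Type) : Prop := exists f : A -> B, injective f.
Definition card_lt (A B : Type) : Prop := card_le A B /\ ~ card_le B A.
Definition equipotent (A B : Type) : Prop := exists f : A -> B, bijective f.

Definition infinite (A : Type) : Prop := card_le nat A.

Definition is_wellorder {K : Type} (lt : K -> K -> Prop) : Prop :=
  (forall a, ~ lt a a) /\
  (forall a b c, lt a b -> lt b c -> lt a c) /\
  (forall a b, lt a b \/ a = b \/ lt b a) /\
  well_founded lt.

Definition is_infinite_cardinal {K : Type} (lt : K -> K -> Prop) : Prop :=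
  is_wellorder lt /\ infinite K /\
  forall a : K, ~ card_le K {b : K | lt b a}.

Definition regular {K : Type} (lt : K -> K -> Prop) : Prop :=
  forall S : K -> Prop,
    (forall a, exists b, S b /\ (a = b \/ lt a b)) -> card_le K {x : K | S x}.

(* basic open set of X^kappa: all h extending f restricted to alpha
   (eta := f|alpha, a function with domain the ordinal alpha < kappa) *)
Definition basic_nbhd {K X : Type} (lt : K -> K -> Prop)
    (alpha : K) (f : K -> X) (h : K -> X) : Prop :=
  forall b, lt b alpha -> h b = f b.

Definition open_prod {K : Type} (lt : K -> K -> Prop)
    (U : (K -> K) -> (K -> bool) -> Prop) : Prop :=
  forall f g, U f g ->
    exists alpha beta : K,
      forall f' g', basic_nbhd lt alpha f f' -> basic_nbhd lt beta g g' -> U f' g'.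

Definition closed_prod {K : Type} (lt : K -> K -> Prop)
    (C : (K -> K) -> (K -> bool) -> Prop) : Prop :=
  open_prod lt (fun f g => ~ C f g).

(* Code f : kappa -> kappa injectively by an element c f of 2^lambda: take the
   characteristic function of its graph under a pairing kappa x kappa -> kappa
   (Hessenberg) and transport it along 2^kappa ~ 2^lambda.  Fix an injection
   iota : lambda -> kappa; as kappa is regular and lambda < kappa, iota is bounded by
   some alpha < kappa.  Then C = {(f, g) | f in A, c f = g o iota} projects onto A, and
   it is closed because g restricted to alpha already determines the only possible f.

   Hessenberg's theorem kappa x kappa <= kappa goes by induction along kappa using
   Goedel's ordering of pairs (by maximum, then lexicographically): the pairs below
   (m, n) lie in the square of [0, max m n], which by induction is smaller than kappa,
   and a well-ordered set whose proper initial segments are all smaller than kappa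
   injects into kappa.  When all proper segments are finite, kappa = omega and Cantor
   pairing does the job. *)

From Stdlib Require Import Classical ClassicalEpsilon FunctionalExtensionality Lia Cantor.
From Stdlib Require Import Relation_Operators Lexicographic_Product Inverse_Image.

Definition card_le_set {X Y : Type} (A : X -> Prop) (B : Y -> Prop) : Prop :=
  exists f : X -> Y, (forall x, A x -> B (f x)) /\
    (forall x y, A x -> A y -> f x = f y -> x = y).

Definition infinite_set {X : Type} (A : X -> Prop) : Prop :=
  card_le_set (fun _ : nat => True) A.

Definition square {X : Type} (A : X -> Prop) : X * X -> Prop :=
  fun p => A (fst p) /\ A (snd p).

Definition trichotomous {X : Type} (R : X -> X -> Prop) : Prop :=
  forall x y, R x y \/ x = y \/ R y x.

Lemma card_le_set_trans {X Y Z : Type} (A : X -> Prop) (B : Y -> Prop) (C : Z -> Prop) :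
  card_le_set A B -> card_le_set B C -> card_le_set A C.
Proof.
  intros [f [Hf If]] [g [Hg Ig]].
  exists (fun x => g (f x)). split; auto.
Qed.

Lemma card_le_set_subset {X : Type} (A B : X -> Prop) :
  (forall x, A x -> B x) -> card_le_set A B.
Proof. intros H. exists (fun x => x). split; auto. Qed.

Lemma card_le_set_square {X Y : Type} (A : X -> Prop) (B : Y -> Prop) :
  card_le_set A B -> card_le_set (square A) (square B).
Proof.
  intros [f [Hf If]].
  exists (fun p => (f (fst p), f (snd p))). split.
  - intros [x y] [Hx Hy]. split; simpl in *; auto.
  - intros [x y] [x' y'] [Hx Hy] [Hx' Hy'] E. simpl in *.
    injection E as Ex Ey. f_equal; auto.
Qed.

Lemma card_le_sig_iff {X Y : Type} (B : Y -> Prop) :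
  card_le X {y | B y} <-> card_le_set (fun _ : X => True) B.
Proof.
  split.
  - intros [f If]. exists (fun x => proj1_sig (f x)). split.
    + intros x _. exact (proj2_sig (f x)).
    + intros x y _ _ E. apply If.
      destruct (f x) as [u Hu], (f y) as [v Hv]. simpl in E. subst v.
      f_equal. apply proof_irrelevance.
  - intros [f [Hf If]]. exists (fun x => exist B (f x) (Hf x I)).
    intros x y E. apply If; auto. exact (f_equal (@proj1_sig _ _) E).
Qed.

Lemma infinite_set_remove {X : Type} (A : X -> Prop) (z : X) :
  infinite_set A -> infinite_set (fun y => A y /\ y <> z).
Proof.
  intros [h [Hh Ih]].
  destruct (classic (exists n0, h n0 = z)) as [[n0 <-]|Hz].
  - exists (fun n => h (n + S n0)). split.
    + intros n _. split; [apply Hh; exact I|].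
      intros E. apply Ih in E; auto. lia.
    + intros x y _ _ E. apply Ih in E; auto. lia.
  - exists h. split; auto. intros n _. split; [apply Hh; exact I|].
    intros E. apply Hz. eauto.
Qed.

Lemma card_le_set_add_point {X : Type} (A : X -> Prop) (z : X) :
  infinite_set A -> card_le_set (fun y => A y \/ y = z) A.
Proof.
  intros [h [Hh Ih]].
  assert (h_inj : forall m n, h m = h n -> m = n) by auto.
  (* Hilbert's hotel: z moves into room h 0, and every guest h n moves to h (S n). *)
  pose (shift y := match excluded_middle_informative (exists n, h n = y) with
                   | left e => h (S (proj1_sig (constructive_indefinite_description _ e)))
                   | right _ => y
                   end).
  assert (Hshift : forall y, (exists n, y = h n /\ shift y = h (S n)) \/
                             ((forall n, h n <> y) /\ shift y = y)).
  { intros y. unfold shift. destruct excluded_middle_informative as [e|ne].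
    - destruct (constructive_indefinite_description _ e) as [n Hn]. left. eauto.
    - right. split; auto. intros n E. apply ne. eauto. }
  assert (shift_inj : forall x y, shift x = shift y -> x = y).
  { intros x y.
    destruct (Hshift x) as [[n [-> ->]]|[Hx ->]], (Hshift y) as [[m [-> ->]]|[Hy ->]];
      intros E; auto.
    - apply h_inj in E. congruence.
    - exfalso. exact (Hy (S n) E).
    - exfalso. exact (Hx (S m) (eq_sym E)). }
  assert (shift_fresh : forall y, shift y <> h 0).
  { intros y. destruct (Hshift y) as [[n [_ ->]]|[Hy ->]]; intros E.
    - apply h_inj in E. discriminate.
    - exact (Hy 0 (eq_sym E)). }
  exists (fun y => if excluded_middle_informative (y = z) then h 0 else shift y). split.
  - intros y Hy. destruct excluded_middle_informative as [_|Hyz]; [apply Hh; exact I|].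
    destruct (Hshift y) as [[n [_ ->]]|[_ ->]]; [apply Hh; exact I|tauto].
  - intros x y _ _.
    destruct (excluded_middle_informative (x = z)), (excluded_middle_informative (y = z));
      intros E.
    + congruence.
    + exfalso. exact (shift_fresh y (eq_sym E)).
    + exfalso. exact (shift_fresh x E).
    + exact (shift_inj x y E).
Qed.

Section SmallSegments.
Context {P Y : Type} (R : P -> P -> Prop) (R_wf : well_founded R) (R_tri : trichotomous R).
Context (D : P -> Prop) (T : Y -> Prop) (y0 : Y).
Hypothesis segments_small : forall p, D p -> ~ card_le_set T (fun q => D q /\ R q p).

Definition fresh_value (p : P) (rec : forall q, R q p -> Y) : Y :=
  epsilon (inhabits y0) (fun y => T y /\ forall q (Hq : R q p), D q -> rec q Hq <> y).

Definition greedy_embedding : P -> Y := Fix R_wf (fun _ => Y) fresh_value.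

Lemma greedy_embedding_eq (p : P) :
  greedy_embedding p =
  epsilon (inhabits y0) (fun y => T y /\ forall q, R q p -> D q -> greedy_embedding q <> y).
Proof.
  unfold greedy_embedding. rewrite Fix_eq; [reflexivity|].
  intros x f g Hfg. unfold fresh_value.
  replace f with g; [reflexivity|].
  apply functional_extensionality_dep. intros q.
  apply functional_extensionality_dep. intros Hq. symmetry. apply Hfg.
Qed.

Lemma greedy_embedding_fresh (p : P) : D p ->
  T (greedy_embedding p) /\ forall q, R q p -> D q -> greedy_embedding q <> greedy_embedding p.
Proof.
  intros Dp. rewrite greedy_embedding_eq.
  apply (epsilon_spec (inhabits y0)).
  apply NNPP. intros Hnone. apply (segments_small p Dp).
  assert (Hused : forall y, T y -> exists q, D q /\ R q p /\ greedy_embedding q = y).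
  { intros y Ty. apply NNPP. intros Hy. apply Hnone. exists y. split; auto.
    intros q Hq Dq E. apply Hy. eauto. }
  exists (fun y => epsilon (inhabits p) (fun q => D q /\ R q p /\ greedy_embedding q = y)).
  split.
  - intros y Ty. destruct (epsilon_spec (inhabits p) _ (Hused y Ty)) as [Dq [Hq _]]. auto.
  - intros y y' Ty Ty' E.
    destruct (epsilon_spec (inhabits p) _ (Hused y Ty)) as [_ [_ Ey]].
    destruct (epsilon_spec (inhabits p) _ (Hused y' Ty')) as [_ [_ Ey']].
    rewrite <- Ey, <- Ey', E. reflexivity.
Qed.

Lemma card_le_set_of_small_segments : card_le_set D T.
Proof.
  exists greedy_embedding. split.
  - intros p Dp. exact (proj1 (greedy_embedding_fresh p Dp)).
  - intros p q Dp Dq E.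
    destruct (R_tri p q) as [H|[H|H]]; auto; exfalso.
    + exact (proj2 (greedy_embedding_fresh q Dq) p H Dp E).
    + exact (proj2 (greedy_embedding_fresh p Dp) q H Dq (eq_sym E)).
Qed.

End SmallSegments.

Lemma slexprod_trichotomous {X Z : Type} (RX : X -> X -> Prop) (RZ : Z -> Z -> Prop) :
  trichotomous RX -> trichotomous RZ -> trichotomous (slexprod X Z RX RZ).
Proof.
  intros TX TZ [x z] [x' z'].
  destruct (TX x x') as [H|[<-|H]]; [left; now constructor| |right; right; now constructor].
  destruct (TZ z z') as [H|[<-|H]]; [left; now constructor|auto|right; right; now constructor].
Qed.

Section WellOrder.
Context {K : Type} (lt : K -> K -> Prop) (lt_wo : is_wellorder lt).

Let lt_trans : forall a b c, lt a b -> lt b c -> lt a c := proj1 (proj2 lt_wo).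
Let lt_tri : trichotomous lt := proj1 (proj2 (proj2 lt_wo)).
Let lt_wf : well_founded lt := proj2 (proj2 (proj2 lt_wo)).

Definition seg (a : K) : K -> Prop := fun b => lt b a.
Definition cseg (a : K) : K -> Prop := fun b => lt b a \/ b = a.

Definition is_initial (S : K -> Prop) : Prop :=
  forall a, S a -> ~ card_le_set S (seg a).

Definition downward_closed (S : K -> Prop) : Prop :=
  forall a b, S a -> lt b a -> S b.

Lemma least_element (S : K -> Prop) :
  (exists x, S x) -> exists x, S x /\ forall y, S y -> ~ lt y x.
Proof.
  intros [x Sx]. induction (lt_wf x) as [x _ IH].
  destruct (classic (exists y, S y /\ lt y x)) as [[y [Sy Hy]]|Hmin].
  - exact (IH y Hy Sy).
  - exists x. split; auto. intros y Sy Hy. apply Hmin. eauto.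
Qed.

Lemma cseg_trans (a b c : K) : cseg a b -> cseg b c -> cseg a c.
Proof. unfold cseg. intros [H | ->] [H' | ->]; eauto. Qed.

Lemma seg_mono (a b : K) : cseg b a -> forall c, seg a c -> seg b c.
Proof. unfold cseg, seg. intros [H| ->] c Hc; eauto. Qed.

Lemma initial_unbounded (S : K -> Prop) : infinite_set S -> is_initial S ->
  forall m, S m -> exists a, S a /\ lt m a.
Proof.
  intros Hinf Hinit m Sm. apply NNPP. intros Hmax.
  assert (HS : forall y, S y -> y <> m -> seg m y).
  { intros y Sy Hym. destruct (lt_tri y m) as [H|[H|H]]; [exact H|contradiction|].
    exfalso. apply Hmax. eauto. }
  apply (Hinit m Sm).
  apply card_le_set_trans with (B := fun y => seg m y \/ y = m).
  - apply card_le_set_subset. intros y Sy.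
    destruct (classic (y = m)); auto.
  - apply card_le_set_add_point.
    apply card_le_set_trans with (B := fun y => S y /\ y <> m).
    + apply infinite_set_remove. exact Hinf.
    + apply card_le_set_subset. intros y [Sy Hym]. auto.
Qed.

Definition max_pair (p : K * K) : K :=
  if excluded_middle_informative (lt (fst p) (snd p)) then snd p else fst p.

Definition goedel_lt (p q : K * K) : Prop :=
  slexprod K (K * K) lt (slexprod K K lt lt) (max_pair p, p) (max_pair q, q).

Lemma max_pair_cases (p : K * K) : max_pair p = fst p \/ max_pair p = snd p.
Proof. unfold max_pair. destruct excluded_middle_informative; auto. Qed.

Lemma max_pair_ge (p : K * K) : square (cseg (max_pair p)) p.
Proof.
  unfold max_pair, square, cseg.
  destruct excluded_middle_informative as [H|H]; split; auto.
  destruct (lt_tri (fst p) (snd p)) as [H'|[H'|H']]; auto; contradiction.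
Qed.

Lemma goedel_lt_wf : well_founded goedel_lt.
Proof.
  apply (wf_inverse_image _ _ _ (fun p => (max_pair p, p))).
  apply wf_slexprod; [exact lt_wf|]. apply wf_slexprod; exact lt_wf.
Qed.

Lemma goedel_lt_trichotomous : trichotomous goedel_lt.
Proof.
  intros p q. unfold goedel_lt.
  destruct (slexprod_trichotomous _ _ lt_tri (slexprod_trichotomous _ _ lt_tri lt_tri)
              (max_pair p, p) (max_pair q, q)) as [H|[H|H]]; auto.
  right; left. congruence.
Qed.

Lemma goedel_lt_bound (p q : K * K) : goedel_lt q p -> square (cseg (max_pair p)) q.
Proof.
  intros Hqp.
  assert (Hmax : cseg (max_pair p) (max_pair q)).
  { inversion Hqp; unfold cseg; auto. }
  destruct (max_pair_ge q) as [H1 H2].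
  split; eapply cseg_trans; eauto.
Qed.

Lemma square_le_of_finite_segments (S : K -> Prop) : infinite_set S ->
  (forall a, S a -> ~ infinite_set (seg a)) -> card_le_set (square S) S.
Proof.
  intros Hinf Hfin.
  assert (S_countable : card_le_set S (fun _ : nat => True)).
  { apply (card_le_set_of_small_segments lt lt_wf lt_tri S (fun _ => True) 0).
    intros a Sa Hle. apply (Hfin a Sa).
    apply (card_le_set_trans _ _ _ Hle). apply card_le_set_subset. tauto. }
  apply (card_le_set_trans _ _ _ (card_le_set_square _ _ S_countable)).
  apply (card_le_set_trans _ (fun _ : nat => True)); [|exact Hinf].
  exists to_nat. split; auto.
  intros p q _ _ E. rewrite <- (cancel_of_to p), <- (cancel_of_to q), E. reflexivity.
Qed.

Section HessenbergStep.
Variable S : K -> Prop.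
Hypothesis S_down : downward_closed S.
Hypothesis IH : forall a, S a ->
  infinite_set (seg a) -> is_initial (seg a) -> card_le_set (square (seg a)) (seg a).
Hypothesis S_infinite : infinite_set S.
Hypothesis S_initial : is_initial S.

Lemma initial_seg_above (m : K) : S m -> (exists w, S w /\ infinite_set (seg w)) ->
  exists b, S b /\ infinite_set (seg b) /\ is_initial (seg b) /\ card_le_set (cseg m) (seg b).
Proof.
  intros Sm Hw.
  destruct (least_element _ Hw) as [w [[Sw Iw] Mw]].
  destruct (least_element (fun a => S a /\ card_le_set (cseg m) (seg a))) as [a [[Sa Ha] Ma]].
  { destruct (initial_unbounded S S_infinite S_initial m Sm) as [a [Sa Hma]].
    exists a. split; auto. apply card_le_set_subset. intros y [Hy | ->]; unfold seg; eauto. }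
  destruct (classic (infinite_set (seg a))) as [Ia|Fa].
  - exists a. repeat split; auto.
    intros b Hb Hle. apply (Ma b); auto.
    split; [exact (S_down a b Sa Hb)|]. exact (card_le_set_trans _ _ _ Ha Hle).
  - assert (Haw : cseg w a).
    { destruct (lt_tri a w) as [H|[H|H]]; unfold cseg; auto.
      exfalso. apply Fa. apply (card_le_set_trans _ _ _ Iw).
      apply card_le_set_subset. unfold seg. eauto. }
    exists w. repeat split; auto.
    + intros b Hb Hle. apply (Mw b); auto.
      split; [exact (S_down w b Sw Hb)|]. exact (card_le_set_trans _ _ _ Iw Hle).
    + apply (card_le_set_trans _ _ _ Ha). apply card_le_set_subset. exact (seg_mono a w Haw).
Qed.

Lemma square_le_step : card_le_set (square S) S.
Proof.
  destruct (classic (exists w, S w /\ infinite_set (seg w))) as [Hw|Hfin].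
  - destruct S_infinite as [h [Hh _]].
    apply (card_le_set_of_small_segments goedel_lt goedel_lt_wf goedel_lt_trichotomous
             (square S) S (h 0)).
    intros p Sp Hle.
    assert (Sm : S (max_pair p)).
    { destruct Sp as [S1 S2]. destruct (max_pair_cases p) as [-> | ->]; auto. }
    (* the pairs Goedel-below p lie in the square of [cseg (max_pair p)], which is
       smaller than S *)
    destruct (initial_seg_above (max_pair p) Sm Hw) as [b [Sb [Ib [Initb Hb]]]].
    apply (S_initial b Sb).
    apply (card_le_set_trans _ _ _ Hle).
    apply card_le_set_trans with (B := square (cseg (max_pair p))).
    { apply card_le_set_subset. intros q [_ Hq]. exact (goedel_lt_bound p q Hq). }
    apply (card_le_set_trans _ _ _ (card_le_set_square _ _ Hb)).
    exact (IH b Sb Ib Initb).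
  - apply square_le_of_finite_segments; [exact S_infinite|].
    intros a Sa Ia. apply Hfin. eauto.
Qed.

End HessenbergStep.

Lemma square_le_seg (a : K) :
  infinite_set (seg a) -> is_initial (seg a) -> card_le_set (square (seg a)) (seg a).
Proof.
  induction (lt_wf a) as [a _ IH].
  apply square_le_step.
  - intros b c Hb Hc. unfold seg in *. eauto.
  - intros b Hb. apply IH. exact Hb.
Qed.

End WellOrder.

Lemma infinite_cardinal_full {K : Type} (lt : K -> K -> Prop) : is_infinite_cardinal lt ->
  infinite_set (fun _ : K => True) /\ is_initial lt (fun _ => True).
Proof.
  intros [_ [[h Ih] Hinit]]. split.
  - exists h. split; auto.
  - intros a _ Hle. apply (Hinit a). apply card_le_sig_iff. exact Hle.
Qed.

Theorem hessenberg {K : Type} (lt : K -> K -> Prop) :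
  is_infinite_cardinal lt -> card_le (K * K) K.
Proof.
  intros Hk. pose proof (infinite_cardinal_full lt Hk) as [Hinf Hinit].
  destruct (square_le_step lt (proj1 Hk) (fun _ => True)) as [j [_ Ij]]; auto.
  - intros a b _ _. exact I.
  - intros a _. exact (square_le_seg lt (proj1 Hk) a).
  - exists j. intros p q E. apply Ij; auto; split; exact I.
Qed.

Lemma infinite_cardinal_unbounded {K : Type} (lt : K -> K -> Prop) :
  is_infinite_cardinal lt -> forall b, exists c, lt b c.
Proof.
  intros Hk b. pose proof (infinite_cardinal_full lt Hk) as [Hinf Hinit].
  destruct (initial_unbounded lt (proj1 Hk) _ Hinf Hinit b I) as [c [_ Hc]]. eauto.
Qed.

Lemma card_le_trans {X Y Z : Type} : card_le X Y -> card_le Y Z -> card_le X Z.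
Proof.
  intros [f If] [g Ig]. exists (fun x => g (f x)). intros x y E. auto.
Qed.

Lemma card_le_of_equipotent {X Y : Type} : equipotent X Y -> card_le Y X.
Proof.
  intros [f [_ Sf]].
  exists (fun y => proj1_sig (constructive_indefinite_description _ (Sf y))).
  intros y y' E.
  destruct (constructive_indefinite_description _ (Sf y)) as [x <-].
  destruct (constructive_indefinite_description _ (Sf y')) as [x' <-].
  simpl in E. congruence.
Qed.

Lemma card_le_fun_graph {X Y Z : Type} : card_le (X * Y) Z -> card_le (X -> Y) (Z -> bool).
Proof.
  intros [j Ij].
  exists (fun f z => if excluded_middle_informative (exists x, j (x, f x) = z) then true else false).
  intros f f' E. apply functional_extensionality. intros x.
  apply (f_equal (fun c => c (j (x, f x)))) in E.
  destruct (excluded_middle_informative (exists x', j (x', f x') = j (x, f x))) as [_|Hno].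
  2:{ exfalso. apply Hno. eauto. }
  destruct excluded_middle_informative as [[x' Ex']|]; [|discriminate].
  apply Ij in Ex'. congruence.
Qed.

Lemma card_le_range {X Y : Type} (f : X -> Y) : card_le {y | exists x, f x = y} X.
Proof.
  exists (fun y : {y | exists x, f x = y} =>
            proj1_sig (constructive_indefinite_description _ (proj2_sig y))).
  intros [y Hy] [y' Hy'] E. simpl in E.
  pose proof (proj2_sig (constructive_indefinite_description _ Hy)) as Ey.
  pose proof (proj2_sig (constructive_indefinite_description _ Hy')) as Ey'.
  simpl in Ey, Ey'. rewrite E, Ey' in Ey. subst y'. f_equal. apply proof_irrelevance.
Qed.

Lemma regular_bounded_range {K L : Type} (lt : K -> K -> Prop) :
  is_wellorder lt -> regular lt -> card_lt L K ->
  forall iota : L -> K, exists a, forall l, lt (iota l) a.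
Proof.
  intros [_ [_ [lt_tri _]]] Hreg [_ HKL] iota. apply NNPP. intros Hunb.
  assert (Hrange : forall a, exists b, (exists l, iota l = b) /\ (a = b \/ lt a b)).
  { intros a. apply NNPP. intros Ha. apply Hunb. exists a. intros l.
    destruct (lt_tri (iota l) a) as [H|[H|H]]; auto; exfalso; apply Ha; eauto. }
  exact (HKL (card_le_trans (Hreg _ Hrange) (card_le_range iota))).
Qed.

Section CodedGraph.
Context {K L : Type} (lt : K -> K -> Prop).
Context (code : (K -> K) -> (L -> bool)) (iota : L -> K) (A : (K -> K) -> Prop).

Definition coded_graph (f : K -> K) (g : K -> bool) : Prop :=
  A f /\ code f = (fun l => g (iota l)).

Lemma coded_graph_projection : injective iota ->
  forall f, A f <-> exists g, coded_graph f g.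
Proof.
  intros Iiota f. split; [|intros [g [Af _]]; exact Af].
  intros Af.
  exists (fun k => if excluded_middle_informative (exists l, iota l = k /\ code f l = true)
                   then true else false).
  split; [exact Af|]. apply functional_extensionality. intros l.
  destruct excluded_middle_informative as [[l' [El' Hl']]|Hno].
  - apply Iiota in El'. congruence.
  - destruct (code f l) eqn:Hl; [|reflexivity]. exfalso. apply Hno. eauto.
Qed.

Variable alpha : K.
Hypothesis iota_bounded : forall l, lt (iota l) alpha.

Lemma basic_nbhd_restrict (g g' : K -> bool) :
  basic_nbhd lt alpha g g' -> (fun l => g' (iota l)) = (fun l => g (iota l)).
Proof.
  intros Hg. apply functional_extensionality. intros l. exact (Hg (iota l) (iota_bounded l)).
Qed.

(* Near (f, g) membership depends only on g restricted to alpha, which leaves at most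
   one candidate h for the first coordinate; a basic set around f avoiding h separates. *)
Lemma coded_graph_closed : injective code -> (forall b, exists c, lt b c) ->
  closed_prod lt coded_graph.
Proof.
  intros Icode Hunb f g Hfg.
  destruct (classic (exists h, coded_graph h g)) as [[h [Ah Eh]]|Hnone].
  - assert (Hdiff : exists b, f b <> h b).
    { apply NNPP. intros Hno.
      assert (f = h) as ->.
      { apply functional_extensionality. intros b. apply NNPP. eauto. }
      apply Hfg. split; assumption. }
    destruct Hdiff as [b Hb]. destruct (Hunb b) as [beta Hbeta].
    exists beta, alpha. intros f' g' Hf' Hg' [_ Ef'].
    assert (f' = h) as ->.
    { apply Icode. rewrite Ef', Eh. apply basic_nbhd_restrict. exact Hg'. }
    exact (Hb (eq_sym (Hf' b Hbeta))).
  - exists alpha, alpha. intros f' g' _ Hg' Hfg'. apply Hnone. exists f'.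
    destruct Hfg' as [Af' Ef']. split; [exact Af'|].
    rewrite Ef'. apply basic_nbhd_restrict. exact Hg'.
Qed.

End CodedGraph.

Theorem lemma2p1 (K : Type) (ltK : K -> K -> Prop) (L : Type)
  (Hkappa : is_infinite_cardinal ltK) (Hreg : regular ltK)
  (Hlambda : infinite L) (HLK : card_lt L K)
  (Hexp : equipotent (L -> bool) (K -> bool)) :
  forall A : (K -> K) -> Prop,
    exists C : (K -> K) -> (K -> bool) -> Prop,
      closed_prod ltK C /\ (forall f : K -> K, A f <-> exists g : K -> bool, C f g).
Proof.
  intros A.
  destruct (card_le_trans (card_le_fun_graph (hessenberg ltK Hkappa)) (card_le_of_equipotent Hexp))
    as [code Icode].
  destruct (proj1 HLK) as [iota Iiota].
  destruct (regular_bounded_range ltK (proj1 Hkappa) Hreg HLK iota) as [alpha Halpha].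
  exists (coded_graph code iota A). split.
  - exact (coded_graph_closed ltK code iota A alpha Halpha Icode
             (infinite_cardinal_unbounded ltK Hkappa)).
  - exact (coded_graph_projection code iota A Iiota).
Qed.
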